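(* Let $\Omega$ be the set of real symmetric $m\times m$ matrices, $\mathcal{P}$ the set of $m\times m$ orthogonal matrices, and $s(A,B,P)=\|AP-PB\|$ for $A,B\in\Omega$, $P\in\mathcal{P}$, with $\|\cdot\|$ an orthogonally invariant matrix norm. Let $\Lambda_{A_i}\in\mathbb{R}^m$ be the vector of eigenvalues of $A_i$, ordered from largest to smallest. Then $$d_\mathcal{G}(A_{1:n})=\frac12\sum_{i,j\in[n]}\|\Lambda_{A_i}-\Lambda_{A_j}\|,$$ where $d_\mathcal{G}(A_{1:n})=\min_{P\in S}\frac12\sum_{i,j\in[n]}s(A_i,A_j,P_{i,j})$ with $S=\{\{P_{i,j}\}_{i,j\in[n]}: P_{i,j}\in\mathcal{P},\ P_{i,k}P_{k,j}=P_{i,j}\ \forall i,j,k\in[n],\ P_{i,i}=I\ \forall i\in[n]\}$.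
   Context: The vector norm on the right-hand side is the one corresponding to the matrix norm: the Euclidean norm when the matrix norm is the Frobenius norm, and the $\infty$-norm when the matrix norm is the operator 2-norm. *)

From HB Require Import structures.
From mathcomp Require Import all_boot all_order all_algebra.
From mathcomp Require Import boolp classical_sets reals.
Set Implicit Arguments. Unset Strict Implicit. Unset Printing Implicit Defensive.
Import Order.TTheory GRing.Theory Num.Theory.
Local Open Scope ring_scope.
Local Open Scope classical_set_scope.

Definition symmetric_mx {R : realType} m (A : 'M[R]_m) : Prop := A^T = A.

Definition orthogonal_mx {R : realType} m (P : 'M[R]_m) : Prop :=
  P^T *m P = 1%:M.

Definition eucl_cV {R : realType} m (x : 'cV[R]_m) : R :=
  Num.sqrt (\sum_(i < m) x i 0 ^+ 2).

Definition frob_norm {R : realType} m (A : 'M[R]_m) : R :=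
  Num.sqrt (\sum_(i < m) \sum_(j < m) A i j ^+ 2).

Definition op2_norm {R : realType} m (A : 'M[R]_m) : R :=
  sup [set eucl_cV (A *m x) | x in [set x : 'cV[R]_m | eucl_cV x = 1]].

Definition eucl_rV {R : realType} m (v : 'rV[R]_m) : R :=
  Num.sqrt (\sum_(i < m) v 0 i ^+ 2).
Definition inf_rV {R : realType} m (v : 'rV[R]_m) : R :=
  \big[Num.max/0]_(i < m) `|v 0 i|.

(* The two orthogonally invariant norms considered, with their
   corresponding vector norms. *)
Inductive norm_choice := Frobenius | Operator2.

Definition mat_norm {R : realType} (c : norm_choice) m (A : 'M[R]_m) : R :=
  match c with Frobenius => frob_norm A | Operator2 => op2_norm A end.

Definition vec_norm {R : realType} (c : norm_choice) m (v : 'rV[R]_m) : R :=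
  match c with Frobenius => eucl_rV v | Operator2 => inf_rV v end.

Definition s_cost {R : realType} (c : norm_choice) m (A B P : 'M[R]_m) : R :=
  mat_norm c (A *m P - P *m B).

(* lam is the vector of eigenvalues of A (with multiplicity, i.e. the
   roots of the characteristic polynomial), ordered from largest to smallest *)
Definition eigvals_desc {R : realType} m (A : 'M[R]_m) (lam : 'rV[R]_m) : Prop :=
  char_poly A = \prod_(i < m) ('X - (lam 0 i)%:P) /\
  (forall i j : 'I_m, (i <= j)%N -> lam 0 j <= lam 0 i).

Definition sync_set {R : realType} m n (P : 'I_n -> 'I_n -> 'M[R]_m) : Prop :=
  (forall i j, orthogonal_mx (P i j)) /\
  (forall i j k, P i k *m P k j = P i j) /\
  (forall i, P i i = 1%:M).

Definition sync_cost {R : realType} (c : norm_choice) m n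
  (A : 'I_n -> 'M[R]_m) (P : 'I_n -> 'I_n -> 'M[R]_m) : R :=
  2^-1 * \sum_(i < n) \sum_(j < n) s_cost c (A i) (A j) (P i j).

Definition is_dG {R : realType} (c : norm_choice) m n
  (A : 'I_n -> 'M[R]_m) (v : R) : Prop :=
  (exists P, sync_set P /\ sync_cost c A P = v) /\
  (forall P, sync_set P -> v <= sync_cost c A P).

From HB Require Import structures.
From mathcomp Require Import all_boot all_order all_algebra.
From mathcomp Require Import boolp classical_sets reals.
From mathcomp Require Import ring lra.
Set Implicit Arguments. Unset Strict Implicit. Unset Printing Implicit Defensive.
Import Order.TTheory GRing.Theory Num.Theory.
Local Open Scope ring_scope.

(* Each A_i is orthogonally diagonalisable, A_i = Q_i^T diag(Lam_i) Q_i (by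
   induction on the size, splitting off a unit eigenvector with a Householder
   reflection).  Since both norms are orthogonally invariant,
   s(A_i, A_j, P) = ||D_i W - W D_j|| with D_i = diag(Lam_i) and
   W = Q_i P Q_j^T orthogonal.  The synchronised family P_ij = Q_i^T Q_j makes
   every W the identity, with cost ||Lam_i - Lam_j||.  Conversely, for sorted
   a, b and any orthogonal W, ||D_a W - W D_b|| >= ||a - b||:
   - Frobenius (Hoffman-Wielandt): the squared norm is
     sum_ij (a_i - b_j)^2 W_ij^2, and as (W_ij^2) is doubly stochastic, an Abel
     summation shows sum_ij a_i b_j W_ij^2 <= sum_i a_i b_i;
   - operator norm (Weyl): for each k there is a unit x with x_i = 0 for i < k
     and (W x)_i = 0 for i > k (only n - 1 linear conditions), so the form
     (W x)^T (D_a W - W D_b) x is >= a_k - b_k; exchanging the roles of x and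
     W x gives <= a_k - b_k. *)

Section Euclidean.
Context {R : realType}.

Lemma orthogonal_mx_mulmxT n (Q : 'M[R]_n) : orthogonal_mx Q -> Q *m Q^T = 1%:M.
Proof. exact: mulmx1C. Qed.

Lemma orthogonal_mx_trmx n (Q : 'M[R]_n) : orthogonal_mx Q -> orthogonal_mx Q^T.
Proof. by rewrite /orthogonal_mx trmxK; exact: mulmx1C. Qed.

Lemma orthogonal_mx_mul n (P Q : 'M[R]_n) :
  orthogonal_mx P -> orthogonal_mx Q -> orthogonal_mx (P *m Q).
Proof.
move=> oP oQ; rewrite /orthogonal_mx trmx_mul mulmxA -(mulmxA Q^T) oP mulmx1.
exact: oQ.
Qed.

Definition sqnorm n (y : 'cV[R]_n) : R := \sum_i y i 0 ^+ 2.

Lemma sqnormE n (y : 'cV[R]_n) : sqnorm y = (y^T *m y) 0 0.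
Proof. by rewrite mxE; apply: eq_bigr => i _; rewrite mxE expr2. Qed.

Lemma sqnorm_ge0 n (y : 'cV[R]_n) : 0 <= sqnorm y.
Proof. by apply: sumr_ge0 => i _; rewrite sqr_ge0. Qed.

Lemma sqnorm_eq0 n (y : 'cV[R]_n) : (sqnorm y == 0) = (y == 0).
Proof.
apply/idP/eqP => [/eqP y0|->]; last by rewrite /sqnorm big1 // => i _; rewrite mxE expr0n.
apply/matrixP => i j; rewrite ord1 mxE.
have /(_ i isT)/eqP := psumr_eq0P (fun i _ => sqr_ge0 (y i 0)) y0.
by rewrite sqrf_eq0 => /eqP.
Qed.

Lemma sqnormZ n (a : R) (y : 'cV[R]_n) : sqnorm (a *: y) = a ^+ 2 * sqnorm y.
Proof. by rewrite /sqnorm mulr_sumr; apply: eq_bigr => i _; rewrite mxE exprMn. Qed.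

Lemma sqnorm_normalize n (y : 'cV[R]_n) :
  y != 0 -> sqnorm ((Num.sqrt (sqnorm y))^-1 *: y) = 1.
Proof.
rewrite -sqnorm_eq0 => y0; rewrite sqnormZ exprVn sqr_sqrtr ?sqnorm_ge0 //.
exact: mulVf.
Qed.

Lemma sqnorm_delta n (k : 'I_n) : sqnorm (delta_mx k 0 : 'cV[R]_n) = 1.
Proof.
rewrite /sqnorm (bigD1 k) //= big1 ?addr0 => [|i ik]; first by rewrite mxE !eqxx expr1n.
by rewrite mxE (negbTE ik) expr0n.
Qed.

Lemma sqnorm_orthogonal n (W : 'M[R]_n) (x : 'cV[R]_n) :
  orthogonal_mx W -> sqnorm (W *m x) = sqnorm x.
Proof. by move=> oW; rewrite !sqnormE trmx_mul -mulmxA (mulmxA W^T) oW mul1mx. Qed.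

Lemma eucl_cV_orthogonal n (W : 'M[R]_n) (x : 'cV[R]_n) :
  orthogonal_mx W -> eucl_cV (W *m x) = eucl_cV x.
Proof. by move=> oW; congr Num.sqrt; exact: sqnorm_orthogonal. Qed.

Lemma eucl_cV_eq1 n (x : 'cV[R]_n) : eucl_cV x = 1 <-> sqnorm x = 1.
Proof.
rewrite /eucl_cV -/(sqnorm x); split=> [x1|->]; last exact: sqrtr1.
by rewrite -[sqnorm x]sqr_sqrtr ?sqnorm_ge0 // x1 expr1n.
Qed.

Lemma mulmx_1x1 n (x : 'cV[R]_n) (s : 'M[R]_1) : x *m s = s 0 0 *: x.
Proof. by rewrite {1}[s]mx11_scalar mul_mx_scalar. Qed.

Lemma dot_cV_sym n (u v : 'cV[R]_n) : (u^T *m v) 0 0 = (v^T *m u) 0 0.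
Proof. by rewrite -[u^T *m v]trmxK trmx_mul trmxK mxE. Qed.

(* [0 <= |v - t z|^2 = |v|^2 - t^2] for [t = z^T v]. *)
Lemma dot_unit_sqr_le n (z v : 'cV[R]_n) :
  sqnorm z = 1 -> ((z^T *m v) 0 0) ^+ 2 <= sqnorm v.
Proof.
move=> z1; set t := (z^T *m v) 0 0.
have et : t = \sum_i z i 0 * v i 0 by rewrite /t mxE; apply: eq_bigr => i _; rewrite mxE.
have : sqnorm (v - t *: z) = sqnorm v - t ^+ 2.
  transitivity (sqnorm v - t *+ 2 * \sum_i z i 0 * v i 0 + t ^+ 2 * sqnorm z).
    rewrite /sqnorm !mulr_sumr -sumrB -big_split /=.
    by apply: eq_bigr => i _; rewrite !mxE; ring.
  by rewrite z1 -et; ring.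
by move/(congr1 (fun r => 0 <= r)); rewrite sqnorm_ge0 subr_ge0 => <-.
Qed.

Lemma dot_unit_le n (z v : 'cV[R]_n) :
  sqnorm z = 1 -> `|(z^T *m v) 0 0| <= eucl_cV v.
Proof. by move=> z1; rewrite -sqrtr_sqr ler_sqrt ?sqnorm_ge0 ?dot_unit_sqr_le. Qed.

End Euclidean.

Section Householder.
Context {R : realType} {n : nat}.
Implicit Types u v w : 'cV[R]_n.

Definition householder u : 'M[R]_n := 1%:M - (2 / sqnorm u) *: (u *m u^T).

Lemma householder0 : householder 0 = 1%:M.
Proof. by rewrite /householder mul0mx scaler0 subr0. Qed.

Lemma trmx_householder u : (householder u)^T = householder u.
Proof. by rewrite /householder linearB /= trmx1 linearZ /= trmx_mul trmxK. Qed.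

Lemma householder_orthogonal u : orthogonal_mx (householder u).
Proof.
have [->|u0] := eqVneq u 0; first by rewrite householder0 /orthogonal_mx trmx1 mulmx1.
rewrite /orthogonal_mx trmx_householder /householder.
set c := 2 / sqnorm u; set P := u *m u^T.
have cq : c * sqnorm u = 2 by rewrite divfK // sqnorm_eq0.
have PP : P *m P = sqnorm u *: P.
  by rewrite /P mulmxA -(mulmxA u) mulmx_1x1 -sqnormE -scalemxAl.
rewrite mulmxBl !mulmxBr !mul1mx mulmx1 -scalemxAl -scalemxAr PP !scalerA.
have -> : c * c * sqnorm u = c + c by rewrite -mulrA cq mulr_natr mulr2n.
by rewrite scalerDl opprB addrK subrK.
Qed.

Lemma householder_unit_swap v w :
  sqnorm v = 1 -> sqnorm w = 1 -> householder (v - w) *m v = w.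
Proof.
move=> v1 w1; set u := v - w.
have [u0|u0] := eqVneq u 0.
  by rewrite u0 householder0 mul1mx; apply/eqP; rewrite -subr_eq0 -/u u0.
set s := (u^T *m v) 0 0.
have qs : sqnorm u = 2 * s.
  have entryB (A B : 'M[R]_1) : (A - B) 0 0 = A 0 0 - B 0 0 by rewrite !mxE.
  rewrite /s sqnormE /u !linearB /= !mulmxBl !entryB -!sqnormE v1 w1.
  rewrite (dot_cV_sym w v); ring.
have s0 : s != 0 by apply: contra u0; rewrite -sqnorm_eq0 qs => /eqP->; rewrite mulr0.
rewrite /householder mulmxBl mul1mx -scalemxAl -mulmxA mulmx_1x1 -/s scalerA qs.
rewrite invfM mulrA mulrV ?unitfE ?pnatr_eq0 // mul1r mulVf // scale1r.
by rewrite /u opprB addrC subrK.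
Qed.

End Householder.

Lemma char_poly_conj (R : comUnitRingType) n (P P' A : 'M[R]_n) :
  P *m P' = 1%:M -> char_poly (P *m A *m P') = char_poly A.
Proof.
move=> PP'; have mapPP' : map_mx (@polyC R) P *m map_mx polyC P' = 1%:M.
  by rewrite -map_mxM PP' map_mx1.
rewrite /char_poly; have -> : char_poly_mx (P *m A *m P') =
    map_mx polyC P *m char_poly_mx A *m map_mx polyC P'.
  rewrite /char_poly_mx mulmxBr mulmxBl -!map_mxM scalar_mxC.
  by rewrite -[_ *m map_mx _ P']mulmxA mapPP' mulmx1.
rewrite !det_mulmx mulrC mulrA -det_mulmx -map_mxM (mulmx1C PP') map_mx1 det1.
by rewrite mul1r.
Qed.

Section BlockDiagonal.
Variables (R : comNzRingType) (m1 m2 : nat).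

Lemma trmx_block_diag (A : 'M[R]_m1) (B : 'M[R]_m2) :
  (block_mx A 0 0 B)^T = block_mx A^T 0 0 B^T.
Proof. by rewrite tr_block_mx !trmx0. Qed.

Lemma mulmx_block_diag (A1 A2 : 'M[R]_m1) (B1 B2 : 'M[R]_m2) :
  block_mx A1 0 0 B1 *m block_mx A2 0 0 B2 = block_mx (A1 *m A2) 0 0 (B1 *m B2).
Proof. by rewrite mulmx_block !mulmx0 !mul0mx !addr0 !add0r. Qed.

Lemma char_poly_block_diag (a : R) (B : 'M[R]_m2) :
  char_poly (block_mx (a%:M : 'M_1) 0 0 B) = ('X - a%:P) * char_poly B.
Proof.
by rewrite /char_poly char_block_diag_mx det_ublock det_mx11 !mxE eqxx !mulr1n.
Qed.

End BlockDiagonal.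

Lemma diag_mx_block (R : comNzRingType) m (l : 'rV[R]_(1 + m)) :
  diag_mx l = block_mx (l 0 0)%:M 0 0 (diag_mx (rsubmx l)).
Proof.
rewrite -[l in LHS]hsubmxK diag_mx_row; congr block_mx.
by apply/matrixP => i j; rewrite !ord1 !mxE; congr (l 0 _ *+ _); apply: val_inj.
Qed.

Section Spectral.
Context {R : realType}.

Lemma symmetric_unit_eigenvector n (A : 'M[R]_n) lam : A^T = A -> eigenvalue A lam ->
  exists2 w : 'cV[R]_n, sqnorm w = 1 & A *m w = lam *: w.
Proof.
move=> sA /eigenvalueP[v vA v0]; set w := v^T.
exists ((Num.sqrt (sqnorm w))^-1 *: w); first by rewrite sqnorm_normalize ?trmx_eq0.
by rewrite -scalemxAr -sA -trmx_mul vA linearZ /= scalerA mulrC -scalerA.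
Qed.

Lemma symmetric_eigen_block m (A : 'M[R]_(1 + m)) lam :
  A^T = A -> A *m delta_mx 0 0 = lam *: (delta_mx 0 0 : 'cV_(1 + m)) ->
  A = block_mx (lam%:M : 'M_1) 0 0 (drsubmx A).
Proof.
move=> sA Ae0.
have col0 i : A i 0 = lam * (i == 0)%:R.
  have := congr1 (fun M : 'cV_(1 + m) => M i 0) Ae0.
  by rewrite -colE !mxE eqxx andbT.
have l0 : lshift m (0 : 'I_1) = 0 by apply/val_inj.
rewrite -[LHS](@submxK _ 1 m 1 m); congr block_mx; apply/matrixP => i j;
  rewrite !ord1 !mxE l0.
- by rewrite col0 eqxx !mulr1n mulr1.
- by rewrite -[A]sA mxE col0 mulr0.
- by rewrite col0 mulr0.
Qed.

Lemma symmetric_deflation m (A : 'M[R]_(1 + m)) lam w :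
  A^T = A -> sqnorm w = 1 -> A *m w = lam *: w ->
  exists2 H : 'M[R]_(1 + m), orthogonal_mx H &
    H^T *m A *m H = block_mx (lam%:M : 'M_1) 0 0 (drsubmx (H^T *m A *m H)).
Proof.
move=> sA w1 Aw; pose e0 : 'cV[R]_(1 + m) := delta_mx 0 0.
set H := householder (e0 - w); exists H; first exact: householder_orthogonal.
have He0 : H *m e0 = w by apply: householder_unit_swap; rewrite ?sqnorm_delta.
apply: symmetric_eigen_block; first by rewrite !trmx_mul trmxK sA mulmxA.
rewrite -!mulmxA He0 Aw -scalemxAr.
by rewrite -He0 mulmxA (householder_orthogonal (e0 - w)) mul1mx.
Qed.

Lemma orthogonal_mx_block m (Q : 'M[R]_m) :
  orthogonal_mx Q -> orthogonal_mx (block_mx (1%:M : 'M_1) 0 0 Q).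
Proof.
move=> oQ; rewrite /orthogonal_mx trmx_block_diag mulmx_block_diag trmx1 mulmx1 oQ.
by rewrite -scalar_mx_block.
Qed.

Theorem symmetric_orthogonal_diag m (A : 'M[R]_m) (l : 'rV[R]_m) :
  A^T = A -> char_poly A = \prod_i ('X - (l 0 i)%:P) ->
  exists2 Q : 'M[R]_m, orthogonal_mx Q & A = Q^T *m diag_mx l *m Q.
Proof.
elim: m A l => [|m IH] A l sA chA.
  by exists 1%:M; [rewrite /orthogonal_mx trmx1 mulmx1 | apply/matrixP => [[]]].
have [w w1 Aw] : exists2 w : 'cV_(1 + m), sqnorm w = 1 & A *m w = l 0 0 *: w.
  apply: symmetric_unit_eigenvector => //.
  by rewrite eigenvalue_root_char chA big_ord_recl rootM root_XsubC eqxx.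
have [H oH defA'] := symmetric_deflation sA w1 Aw.
set A' := H^T *m A *m H in defA'; set B := drsubmx A' in defA'.
have sB : B^T = B by rewrite /B trmx_drsub /A' !trmx_mul trmxK sA mulmxA.
have chB : char_poly B = \prod_i ('X - (rsubmx (l : 'rV_(1 + m)) 0 i)%:P).
  apply: (@mulfI _ ('X - (l 0 0)%:P)); first by rewrite polyXsubC_eq0.
  rewrite -char_poly_block_diag -defA' char_poly_conj // chA big_ord_recl.
  congr (_ * _); apply: eq_bigr => i _.
  by rewrite mxE; congr ('X - (l 0 _)%:P); apply: val_inj.
have [Q1 oQ1 defB] := IH B _ sB chB.
exists (block_mx 1%:M 0 0 Q1 *m H^T).
  by apply: orthogonal_mx_mul; [exact: orthogonal_mx_block | exact: orthogonal_mx_trmx].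
have HHT := orthogonal_mx_mulmxT oH.
have -> : A = H *m A' *m H^T by rewrite /A' !mulmxA HHT mul1mx -mulmxA HHT mulmx1.
rewrite defA' defB trmx_mul trmxK -!mulmxA; congr (H *m _).
rewrite !mulmxA; congr (_ *m H^T).
rewrite (diag_mx_block (l : 'rV_(1 + m))) (trmx_block_diag (1%:M : 'M[R]_1) Q1).
by rewrite !mulmx_block_diag trmx1 mul1mx mulmx1.
Qed.

End Spectral.

Section Frobenius.
Context {R : realType} {n : nat}.

Lemma frob_norm_trace (X : 'M[R]_n) : frob_norm X = Num.sqrt (\tr (X^T *m X)).
Proof.
rewrite /frob_norm /mxtrace exchange_big; congr Num.sqrt.
by apply: eq_bigr => i _; rewrite mxE; apply: eq_bigr => k _; rewrite mxE expr2.
Qed.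

Lemma frob_norm_orthogonal (U X V : 'M[R]_n) :
  orthogonal_mx U -> orthogonal_mx V -> frob_norm (U^T *m X *m V) = frob_norm X.
Proof.
move=> /orthogonal_mx_mulmxT oU /orthogonal_mx_mulmxT oV; rewrite !frob_norm_trace.
rewrite !trmx_mul trmxK -!mulmxA (mulmxA U) oU mul1mx mxtrace_mulC -!mulmxA oV.
by rewrite mulmx1.
Qed.

Lemma frob_norm_diag (d : 'rV[R]_n) : frob_norm (diag_mx d) = eucl_rV d.
Proof.
rewrite /frob_norm /eucl_rV; congr Num.sqrt; apply: eq_bigr => i _.
rewrite (bigD1 i) //= big1 ?addr0 => [|j ji]; first by rewrite mxE eqxx mulr1n.
by rewrite mxE eq_sym (negbTE ji) mulr0n expr0n.
Qed.

Lemma frob_norm_diag_commutator (a b : 'rV[R]_n) (W : 'M[R]_n) :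
  frob_norm (diag_mx a *m W - W *m diag_mx b) =
  Num.sqrt (\sum_i \sum_j (a 0 i - b 0 j) ^+ 2 * W i j ^+ 2).
Proof.
congr Num.sqrt; apply: eq_bigr => i _; apply: eq_bigr => j _.
by rewrite mul_diag_mx mul_mx_diag !mxE; ring.
Qed.

Lemma eucl_mulmx_le_frob (M : 'M[R]_n) (x : 'cV[R]_n) :
  sqnorm x = 1 -> eucl_cV (M *m x) <= frob_norm M.
Proof.
move=> x1; rewrite ler_sqrt; last by do 2!apply: sumr_ge0 => ? _; exact: sqr_ge0.
apply: ler_sum => i _; have := dot_unit_sqr_le (row i M)^T x1.
rewrite /sqnorm; under eq_bigr do rewrite !mxE.
by rewrite dot_cV_sym trmxK -row_mul mxE.
Qed.

End Frobenius.

Section Operator2.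
Context {R : realType}.
Local Open Scope classical_set_scope.

Lemma op2_norm_dim0 (M : 'M[R]_0) : op2_norm M = 0.
Proof.
rewrite /op2_norm (_ : [set x | eucl_cV x = 1] = set0) ?image_set0 ?sup0 //.
apply/seteqP; split => x //= /eucl_cV_eq1; rewrite /sqnorm big_ord0 => /esym/eqP.
by rewrite oner_eq0.
Qed.

Lemma op2_norm_ge n (M : 'M[R]_n) x : sqnorm x = 1 -> eucl_cV (M *m x) <= op2_norm M.
Proof.
move=> x1; apply: ub_le_sup; last by exists x => //; exact/eucl_cV_eq1.
by exists (frob_norm M) => _ [y /eucl_cV_eq1 y1 <-]; exact: eucl_mulmx_le_frob.
Qed.

Lemma op2_norm_ge0 n (M : 'M[R]_n) : 0 <= op2_norm M.
Proof.
case: n M => [|n] M; first by rewrite op2_norm_dim0.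
by apply: le_trans _ (op2_norm_ge M (sqnorm_delta 0)); exact: sqrtr_ge0.
Qed.

Lemma op2_norm_le n (M : 'M[R]_n) c : 0 <= c ->
  (forall x, sqnorm x = 1 -> eucl_cV (M *m x) <= c) -> op2_norm M <= c.
Proof.
case: n M => [|n] M c0 Mc; first by rewrite op2_norm_dim0.
apply: ge_sup; first by exists (eucl_cV (M *m delta_mx 0 0)), (delta_mx 0 0);
  rewrite //= eucl_cV_eq1 sqnorm_delta.
by move=> _ [x /eucl_cV_eq1 x1 <-]; exact: Mc.
Qed.

Lemma op2_norm_bilinear_ge n (M : 'M[R]_n) x z :
  sqnorm x = 1 -> sqnorm z = 1 -> `|(z^T *m M *m x) 0 0| <= op2_norm M.
Proof.
move=> x1 z1; rewrite -mulmxA; exact: le_trans (dot_unit_le _ z1) (op2_norm_ge M x1).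
Qed.

Lemma op2_norm_orthogonal n (U X V : 'M[R]_n) :
  orthogonal_mx U -> orthogonal_mx V -> op2_norm (U^T *m X *m V) = op2_norm X.
Proof.
move=> oU oV; have oUT := orthogonal_mx_trmx oU; have oVT := orthogonal_mx_trmx oV.
rewrite /op2_norm; congr sup; apply/seteqP; split => _ [x /= /eucl_cV_eq1 x1 <-].
  exists (V *m x); first by apply/eucl_cV_eq1; rewrite sqnorm_orthogonal.
  by rewrite -!mulmxA [RHS]eucl_cV_orthogonal.
exists (V^T *m x); first by apply/eucl_cV_eq1; rewrite sqnorm_orthogonal.
by rewrite -!mulmxA (mulmxA V) (orthogonal_mx_mulmxT oV) mul1mx eucl_cV_orthogonal.
Qed.

Lemma op2_norm_diag n (d : 'rV[R]_n) : op2_norm (diag_mx d) = inf_rV d.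
Proof.
have mu0 : 0 <= inf_rV d by apply: bigmax_ge_id.
apply/le_anti/andP; split.
  apply: op2_norm_le => // x x1; rewrite -(ger0_norm mu0) -sqrtr_sqr ler_sqrt ?sqr_ge0 //.
  rewrite -[X in _ <= X]mulr1 -x1 /sqnorm mulr_sumr; apply: ler_sum => i _.
  rewrite mul_diag_mx mxE exprMn ler_wpM2r ?sqr_ge0 // -[d 0 i ^+ 2]real_normK ?num_real //.
  by rewrite !expr2 ler_pM // le_bigmax.
rewrite /inf_rV; apply: bigmax_le => [|k _]; first exact: op2_norm_ge0.
apply: le_trans (op2_norm_ge _ (sqnorm_delta k)).
rewrite /eucl_cV (bigD1 k) //= big1 ?addr0 => [|i ik].
  by rewrite mul_diag_mx !mxE !eqxx mulr1 sqrtr_sqr.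
by rewrite mul_diag_mx !mxE (negbTE ik) mulr0 expr0n.
Qed.

End Operator2.

Section Rearrangement.
Context {R : realDomainType}.
Implicit Types (a b c h : nat -> R) (S : nat -> nat -> R).

Definition nonincreasing_on n a := forall i j, (i <= j)%N -> (j < n)%N -> a j <= a i.

Lemma summation_by_parts a h n :
  \sum_(i < n.+1) a i * h i =
  \sum_(t < n) (a t - a t.+1) * (\sum_(i < t.+1) h i) + a n * \sum_(i < n.+1) h i.
Proof.
elim: n => [|n IH]; first by rewrite !big_ord1 big_ord0 add0r.
rewrite big_ord_recr /= IH [in RHS]big_ord_recr /= [\sum_(i < n.+2) _]big_ord_recr /=.
ring.
Qed.

Lemma sum_prefix_mul_ge0 a h n : nonincreasing_on n.+1 a ->
  (forall t, (t < n)%N -> 0 <= \sum_(i < t.+1) h i) ->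
  \sum_(i < n.+1) h i = 0 -> 0 <= \sum_(i < n.+1) a i * h i.
Proof.
move=> ha hH h0; rewrite summation_by_parts h0 mulr0 addr0.
apply: sumr_ge0 => t _; apply: mulr_ge0; last exact: hH.
by rewrite subr_ge0; apply: ha; rewrite ?ltnS.
Qed.

Lemma sum_ord_indicator n t (F : nat -> R) : (t <= n)%N ->
  \sum_(i < t) F i = \sum_(i < n) (i < t)%:R * F i.
Proof.
move=> tn; rewrite (big_ord_widen n F tn) big_mkcond /=.
by apply: eq_bigr => i _; case: ifP; rewrite ?mul1r ?mul0r.
Qed.

Lemma weighted_sum_le_prefix b c n t : (t < n)%N -> nonincreasing_on n b ->
  (forall j, (j < n)%N -> 0 <= c j <= 1) -> \sum_(j < n) c j = t.+1%:R ->
  \sum_(j < n) b j * c j <= \sum_(j < t.+1) b j.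
Proof.
move=> tn hb hc sc; rewrite (sum_ord_indicator b tn) -subr_ge0 -sumrB.
have sum0 : \sum_(j < n) b t * ((j < t.+1)%:R - c j) = 0.
  rewrite -mulr_sumr sumrB sc.
  have := sum_ord_indicator (fun=> 1) tn; under [RHS]eq_bigr do rewrite mulr1.
  by move<-; rewrite sumr_const card_ord subrr mulr0.
rewrite -[leLHS]sum0; apply: ler_sum => j _; rewrite [(_ < _)%:R * _]mulrC -mulrBr.
have /andP[c0 c1] := hc j (ltn_ord j).
case: ltnP => jt.
  by apply: ler_wpM2r; [rewrite subr_ge0 | apply: hb; rewrite // -ltnS].
by apply: ler_wnM2r; [rewrite sub0r oppr_le0 | apply: hb; rewrite // ltnW].
Qed.

Lemma rearrangement_doubly_stochastic a b S n :
  nonincreasing_on n a -> nonincreasing_on n b ->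
  (forall i j, (i < n)%N -> (j < n)%N -> 0 <= S i j) ->
  (forall i, (i < n)%N -> \sum_(j < n) S i j = 1) ->
  (forall j, (j < n)%N -> \sum_(i < n) S i j = 1) ->
  \sum_(i < n) \sum_(j < n) a i * b j * S i j <= \sum_(i < n) a i * b i.
Proof.
case: n => [|n] ha hb hS hr hc; first by rewrite !big_ord0.
(* Abel summation against [h], whose partial sums are nonnegative and total 0. *)
pose h i := b i - \sum_(j < n.+1) b j * S i j.
rewrite -subr_ge0 -sumrB.
have -> : \sum_(i < n.+1) (a i * b i - \sum_(j < n.+1) a i * b j * S i j) =
    \sum_(i < n.+1) a i * h i.
  apply: eq_bigr => i _; rewrite /h mulrBr mulr_sumr; congr (_ - _).
  by apply: eq_bigr => j _; rewrite mulrA.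
apply: sum_prefix_mul_ge0 => // [t tn|]; last first.
  rewrite sumrB exchange_big /=; apply/eqP; rewrite subr_eq0; apply/eqP.
  by apply: eq_bigr => j _; rewrite -mulr_sumr hc ?mulr1.
have tn' : (t < n.+1)%N by rewrite ltnW.
have it i : (i < t.+1)%N -> (i < n.+1)%N by move=> /leq_trans; apply.
pose c j := \sum_(i < t.+1) S i j.
rewrite sumrB subr_ge0 exchange_big /=.
under eq_bigr do rewrite -mulr_sumr.
apply: (weighted_sum_le_prefix (c := c)) => // [j jn|].
  apply/andP; split; first by apply: sumr_ge0 => i _; apply: hS (it _ (ltn_ord i)) jn.
  rewrite -(hc j jn) /c (sum_ord_indicator (S^~ j) tn'); apply: ler_sum => i _.
  by case: ltnP => _; rewrite ?mul1r ?mul0r ?hS.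
rewrite exchange_big /= (eq_bigr (fun=> 1)) => [|i _]; last exact: hr (it _ (ltn_ord i)).
by rewrite sumr_const card_ord.
Qed.

End Rearrangement.

Section Weyl.
Context {R : realType} {n : nat}.
Implicit Types (a b d : 'rV[R]_n) (W : 'M[R]_n).

Definition nonincreasing_rV d := forall i j : 'I_n, (i <= j)%N -> d 0 j <= d 0 i.

Lemma unit_kernel_of_zero_row (L : 'M[R]_n) i0 : (forall j, L i0 j = 0) ->
  exists2 y : 'cV[R]_n, sqnorm y = 1 & L *m y = 0.
Proof.
move=> L0; have : \det L^T == 0.
  by rewrite det_tr (expand_det_row L i0) big1 // => j _; rewrite L0 mul0r.
case/det0P => v v0 vL; exists ((Num.sqrt (sqnorm v^T))^-1 *: v^T).
  by rewrite sqnorm_normalize ?trmx_eq0.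
by rewrite -scalemxAr -[L]trmxK -trmx_mul vL trmx0 scaler0.
Qed.

(* Only [n - 1] linear conditions: row [k] of the stacked system is zero. *)
Lemma exists_unit_vanishing (U V : 'M[R]_n) (k : 'I_n) :
  exists y : 'cV[R]_n, [/\ sqnorm y = 1,
    forall i : 'I_n, (i < k)%N -> (U *m y) i 0 = 0 &
    forall i : 'I_n, (k < i)%N -> (V *m y) i 0 = 0].
Proof.
pose L := \matrix_(i, j) if (i < k)%N then U i j else if (k < i)%N then V i j else 0.
have [|y y1 Ly] := @unit_kernel_of_zero_row L k; first by move=> j; rewrite mxE ltnn.
have Ly0 i : (L *m y) i 0 = 0 by rewrite Ly mxE.
exists y; split => // i ik; rewrite -(Ly0 i) !mxE; apply: eq_bigr => j _; rewrite mxE ik //.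
by rewrite ltnNge ltnW.
Qed.

Lemma diag_quadE d (y : 'cV[R]_n) :
  (y^T *m diag_mx d *m y) 0 0 = \sum_i d 0 i * y i 0 ^+ 2.
Proof. by rewrite mxE; apply: eq_bigr => i _; rewrite mul_mx_diag !mxE expr2; ring. Qed.

Lemma diag_quad_ge d (y : 'cV[R]_n) (k : 'I_n) : nonincreasing_rV d -> sqnorm y = 1 ->
  (forall i : 'I_n, (k < i)%N -> y i 0 = 0) -> d 0 k <= \sum_i d 0 i * y i 0 ^+ 2.
Proof.
move=> hd y1 y0; rewrite -[d 0 k]mulr1 -y1 /sqnorm mulr_sumr; apply: ler_sum => i _.
by case: (leqP i k) => ik; [rewrite ler_wpM2r ?sqr_ge0 ?hd | rewrite y0 // expr0n !mulr0].
Qed.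

Lemma diag_quad_le d (y : 'cV[R]_n) (k : 'I_n) : nonincreasing_rV d -> sqnorm y = 1 ->
  (forall i : 'I_n, (i < k)%N -> y i 0 = 0) -> \sum_i d 0 i * y i 0 ^+ 2 <= d 0 k.
Proof.
move=> hd y1 y0; rewrite -[d 0 k]mulr1 -y1 /sqnorm mulr_sumr; apply: ler_sum => i _.
by case: (leqP k i) => ik; [rewrite ler_wpM2r ?sqr_ge0 ?hd | rewrite y0 // expr0n !mulr0].
Qed.

Lemma op2_norm_diag_commutator_ge a b W (k : 'I_n) :
  nonincreasing_rV a -> nonincreasing_rV b -> orthogonal_mx W ->
  `|a 0 k - b 0 k| <= op2_norm (diag_mx a *m W - W *m diag_mx b).
Proof.
move=> ha hb oW; set M := diag_mx a *m W - W *m diag_mx b.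
have formM (x : 'cV[R]_n) : ((W *m x)^T *m M *m x) 0 0 =
    \sum_i a 0 i * (W *m x) i 0 ^+ 2 - \sum_i b 0 i * x i 0 ^+ 2.
  rewrite -!diag_quadE /M mulmxBr mulmxBl mxE [X in _ + X]mxE.
  by rewrite !mulmxA trmx_mul -(mulmxA x^T W^T W) oW mulmx1.
have opM (x : 'cV[R]_n) : sqnorm x = 1 -> `|((W *m x)^T *m M *m x) 0 0| <= op2_norm M.
  by move=> x1; apply: op2_norm_bilinear_ge; rewrite ?sqnorm_orthogonal.
case: (lerP (b 0 k) (a 0 k)) => _.
  have [x [x1 x0 Wx0]] := exists_unit_vanishing 1%:M W k.
  apply: le_trans (opM x x1); apply: le_trans (ler_norm _); rewrite formM lerB //.
    by apply: diag_quad_ge; rewrite ?sqnorm_orthogonal.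
  by apply: diag_quad_le => // i ik; have := x0 i ik; rewrite mul1mx.
have [x [x1 Wx0 x0]] := exists_unit_vanishing W 1%:M k.
apply: le_trans (opM x x1); rewrite -normrN; apply: le_trans (ler_norm _).
rewrite formM opprB lerB //; last by apply: diag_quad_le; rewrite ?sqnorm_orthogonal.
by apply: diag_quad_ge => // i ik; have := x0 i ik; rewrite mul1mx.
Qed.

End Weyl.

Section HoffmanWielandt.
Context {R : realType} {n : nat}.
Implicit Types (a b : 'rV[R]_n) (W : 'M[R]_n).

Lemma rearrangement_doubly_stochastic_mx a b (S : 'M[R]_n) :
  nonincreasing_rV a -> nonincreasing_rV b -> (forall i j, 0 <= S i j) ->
  (forall i, \sum_j S i j = 1) -> (forall j, \sum_i S i j = 1) ->
  \sum_i \sum_j a 0 i * b 0 j * S i j <= \sum_i a 0 i * b 0 i.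
Proof.
case: n a b S => [|N] a b S ha hb hS hr hc; first by rewrite !big_ord0.
have inordE1 (F : 'I_N.+1 -> R) : \sum_(i < N.+1) F (inord i) = \sum_i F i.
  by apply: eq_bigr => i _; rewrite inord_val.
have inordE2 (F : 'I_N.+1 -> 'I_N.+1 -> R) :
    \sum_(i < N.+1) \sum_(j < N.+1) F (inord i) (inord j) = \sum_i \sum_j F i j.
  by apply: eq_bigr => i _; rewrite inord_val inordE1.
have inord_nonincr (d : 'rV[R]_N.+1) :
    nonincreasing_rV d -> nonincreasing_on N.+1 (fun k => d 0 (inord k)).
  move=> hd i j ij jN; have iN := leq_ltn_trans ij jN.
  by apply: hd; rewrite !inordK.
rewrite -(inordE2 (fun i j => a 0 i * b 0 j * S i j)) -(inordE1 (fun i => a 0 i * b 0 i)).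
apply: (rearrangement_doubly_stochastic (inord_nonincr a ha) (inord_nonincr b hb)
  (S := fun k l => S (inord k) (inord l))) => [i j _ _|i _|j _]; first exact: hS.
  by rewrite -(hr (inord i)) -(inordE1 (S (inord i))).
by rewrite -(hc (inord j)) -(inordE1 (S^~ (inord j))).
Qed.

Lemma eucl_rV_le_frob_diag_commutator a b W :
  nonincreasing_rV a -> nonincreasing_rV b -> orthogonal_mx W ->
  eucl_rV (a - b) <= frob_norm (diag_mx a *m W - W *m diag_mx b).
Proof.
move=> ha hb oW; rewrite frob_norm_diag_commutator ler_sqrt; last first.
  by do 2!apply: sumr_ge0 => ? _; apply: mulr_ge0; exact: sqr_ge0.
pose S : 'M[R]_n := \matrix_(i, j) W i j ^+ 2.
have hr i : \sum_j S i j = 1.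
  have := congr1 (fun M : 'M[R]_n => M i i) (orthogonal_mx_mulmxT oW).
  by rewrite !mxE eqxx mulr1n => <-; apply: eq_bigr => j _; rewrite !mxE expr2.
have hc j : \sum_i S i j = 1.
  have := congr1 (fun M : 'M[R]_n => M j j) oW.
  by rewrite !mxE eqxx mulr1n => <-; apply: eq_bigr => i _; rewrite !mxE expr2.
have hS i j : 0 <= S i j by rewrite mxE sqr_ge0.
have := rearrangement_doubly_stochastic_mx ha hb hS hr hc.
have -> : \sum_i \sum_j (a 0 i - b 0 j) ^+ 2 * W i j ^+ 2 =
    \sum_i a 0 i ^+ 2 + \sum_j b 0 j ^+ 2 - 2 * \sum_i \sum_j a 0 i * b 0 j * S i j.
  have sa : \sum_i \sum_j a 0 i ^+ 2 * S i j = \sum_i a 0 i ^+ 2.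
    by apply: eq_bigr => i _; rewrite -mulr_sumr hr mulr1.
  have sb : \sum_i \sum_j b 0 j ^+ 2 * S i j = \sum_j b 0 j ^+ 2.
    by rewrite exchange_big /=; apply: eq_bigr => j _; rewrite -mulr_sumr hc mulr1.
  rewrite -sa -sb mulr_sumr -big_split /= -sumrB; apply: eq_bigr => i _.
  rewrite mulr_sumr -big_split /= -sumrB; apply: eq_bigr => j _; rewrite mxE; ring.
have -> : \sum_i (a - b) 0 i ^+ 2 =
    \sum_i a 0 i ^+ 2 + \sum_j b 0 j ^+ 2 - 2 * \sum_i a 0 i * b 0 i.
  rewrite mulr_sumr -big_split /= -sumrB; apply: eq_bigr => i _; rewrite !mxE; ring.
lra.
Qed.

End HoffmanWielandt.

Section Synchronization.
Context {R : realType}.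

Lemma mat_norm_orthogonal c n (U X V : 'M[R]_n) :
  orthogonal_mx U -> orthogonal_mx V -> mat_norm c (U^T *m X *m V) = mat_norm c X.
Proof. by case: c => oU oV /=; [exact: frob_norm_orthogonal | exact: op2_norm_orthogonal]. Qed.

Lemma mat_norm_diag c n (d : 'rV[R]_n) : mat_norm c (diag_mx d) = vec_norm c d.
Proof. by case: c; [exact: frob_norm_diag | exact: op2_norm_diag]. Qed.

Lemma vec_norm_le_diag_commutator c n (a b : 'rV[R]_n) (W : 'M[R]_n) :
  nonincreasing_rV a -> nonincreasing_rV b -> orthogonal_mx W ->
  vec_norm c (a - b) <= mat_norm c (diag_mx a *m W - W *m diag_mx b).
Proof.
case: c => ha hb oW /=; first exact: eucl_rV_le_frob_diag_commutator.
apply: bigmax_le => [|k _]; first exact: op2_norm_ge0.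
by rewrite !mxE; exact: op2_norm_diag_commutator_ge.
Qed.

Lemma s_cost_diag c n (A B Q Q' P : 'M[R]_n) (a b : 'rV[R]_n) :
  orthogonal_mx Q -> orthogonal_mx Q' ->
  A = Q^T *m diag_mx a *m Q -> B = Q'^T *m diag_mx b *m Q' ->
  s_cost c A B P = mat_norm c (diag_mx a *m (Q *m P *m Q'^T) - Q *m P *m Q'^T *m diag_mx b).
Proof.
move=> oQ oQ' -> ->; rewrite /s_cost -[RHS](mat_norm_orthogonal c _ oQ oQ').
congr mat_norm; rewrite mulmxBr mulmxBl !mulmxA oQ mul1mx.
by rewrite -(mulmxA (Q^T *m diag_mx a *m Q *m P)) oQ' mulmx1.
Qed.

Lemma sync_set_frames m n (Q : 'I_n -> 'M[R]_m) :
  (forall i, orthogonal_mx (Q i)) -> sync_set (fun i j => (Q i)^T *m Q j).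
Proof.
move=> oQ; split=> [i j|]; first exact: orthogonal_mx_mul (orthogonal_mx_trmx (oQ i)) (oQ j).
split=> [i j k|i]; last exact: oQ.
by rewrite mulmxA -(mulmxA _ (Q k)) (orthogonal_mx_mulmxT (oQ k)) mulmx1.
Qed.

End Synchronization.

Unset Implicit Arguments.

Theorem theorem7 (R : realType) (c : norm_choice) (m n : nat)
  (A : 'I_n -> 'M[R]_m) (Lam : 'I_n -> 'rV[R]_m) :
  (forall i, symmetric_mx (A i)) ->
  (forall i, eigvals_desc (A i) (Lam i)) ->
  is_dG c A (2^-1 * \sum_(i < n) \sum_(j < n) vec_norm c (Lam i - Lam j)).
Proof.
move=> sA eA.
have diagA i : exists Qi, orthogonal_mx Qi /\ A i = Qi^T *m diag_mx (Lam i) *m Qi.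
  by have [Qi oQi defAi] := symmetric_orthogonal_diag (sA i) (eA i).1; exists Qi.
have [Q hQ] := choice diagA.
have costE i j P := s_cost_diag c P (hQ i).1 (hQ j).1 (hQ i).2 (hQ j).2.
split.
  exists (fun i j => (Q i)^T *m Q j).
  split; first by apply: sync_set_frames => i; case: (hQ i).
  congr (_ * _); apply: eq_bigr => i _; apply: eq_bigr => j _; rewrite costE.
  have -> : Q i *m ((Q i)^T *m Q j) *m (Q j)^T = 1%:M.
    by rewrite mulmxA (orthogonal_mx_mulmxT (hQ i).1) mul1mx (orthogonal_mx_mulmxT (hQ j).1).
  by rewrite mulmx1 mul1mx -linearB mat_norm_diag.
move=> P [oP _]; rewrite /sync_cost ler_wpM2l ?invr_ge0 ?ler0n //.
apply: ler_sum => i _; apply: ler_sum => j _; rewrite costE.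
apply: vec_norm_le_diag_commutator; [exact: (eA i).2 | exact: (eA j).2 |].
exact: orthogonal_mx_mul (orthogonal_mx_mul (hQ i).1 (oP i j)) (orthogonal_mx_trmx (hQ j).1).
Qed.
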